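(* If $M$ is a thin representation of $Q$ (i.e. $\dim M_p\le1$ for all $p\in Q_0$), then for any ordered basis $\mathcal B$ the reduced Schubert system $\overline\Sigma$ of $M$ with respect to $\mathcal B$ is trivial (has no vertices). Consequently, for every dimension vector $\underline e$, the Schubert decomposition $\mathrm{Gr}_{\underline e}(M)=\coprod_{\beta}C_\beta^M$ is a decomposition into affine spaces; more precisely, $\mathrm{Gr}_{\underline e}(M)$ is a point if there exists an extremal successor closed $\beta\subset\mathcal B$ of type $\underline e$, and $\mathrm{Gr}_{\underline e}(M)$ is empty otherwise.
   Context: Let $Q$ be a quiver with finite $Q_0,Q_1$ and $M$ a finite-dimensional complex representation with ordered basis $\mathcal B=\bigcup_p\mathcal B_p$ (bases $\mathcal B_p$ of $M_p$, total order on $\mathcal B$). For $v:p\to q$, $i\in\mathcal B_p$ write $M_v(i)=\sum_j\mu_{v,i,j}j$; the coefficient quiver $\Gamma$ has vertices $\mathcal B$ and arrows $(v,i,j)$ from $i$ to $j$ with $\mu_{v,i,j}\ne0$; $F:\Gamma\to Q$ is the natural map. An arrow $(v,s,t)$ of $\Gamma$ is extremal if for all arrows $(v,s',t')\in\Gamma_1$ other than $(v,s,t)$, $s<s'$ or $t'<t$. $\beta\subset\mathcal B$ is extremal successor closed if for every extremal arrow $(v,s,t)$, $s\in\beta$ implies $t\in\beta$; $\beta$ is of type $\underline e$ if $|\beta\cap\mathcal B_p|=e_p$ for all $p$. Schubert decomposition: identify $M$ with $\mathbb C^d$ via $\mathcal B$, subrepresentations $N$ with $\bigoplus_pN_p$;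 $\mathrm{Gr}_{\underline e}(M)$ is the variety of subrepresentations with $\dim N_p=e_p$; for $|\beta|=e$, $\Delta_\beta$ is the Plücker coordinate, $\beta\le\beta'$ iff the $l$-th smallest element of $\beta$ is $\le$ that of $\beta'$ for all $l$, $C_\beta(d)=\{V:\Delta_\beta(V)\ne0,\Delta_{\beta'}(V)=0\ \forall\beta'>\beta\}$, $C^M_\beta=C_\beta(d)\cap\mathrm{Gr}_{\underline e}(M)$ for $\beta$ of type $\underline e$, and $\mathrm{Gr}_{\underline e}(M)=\coprod_{\beta\text{ of type }\underline e}C_\beta^M$. It is a decomposition into affine spaces if every cell is empty or an affine space. Reduced Schubert system: relevant pairs $\mathrm{Rel}^2=\{(i,j)\in\mathcal B^2:F(i)=F(j),i\le j\}$; relevant triples $\mathrm{Rel}^3$ = triples $(v,t,s)$ with $v:p\to q$, $s\in F^{-1}(p)$, $t\in F^{-1}(q)$ such that some $(v,s',t')\in\Gamma_1$ has $s\ge s'$ and $t\le t'$. For such a triple let $\overline E(v,t,s)=\sum_{(v,s,t')\in\Gamma_1,t<t'}\mu_{v,s,t'}w_{t,t'}+\sum_{(v,s',t')\in\Gamma_1,t<t',s'<s}\mu_{v,s',t'}w_{t,t'}w_{s',s}-\sum_{(v,s',t)\in\Gamma_1,s'<s}\mu_{v,s',t}w_{s',s}-\mu_{v,s,t}$ (with $\mu_{v,s,t}=0$ if $(v,s,t)\notin\Gamma_1$). The reduced Schubert system $\overline\Sigma$ is the graph with vertex set $\{(i,j)\in\mathrm{Rel}^2:i<j\}\sqcup\{(v,t,s)\in\mathrm{Rel}^3:(v,s,t)\text{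 is not an extremal arrow of }\Gamma\}$, an edge $\{(v,t,s),(i,j)\}$ iff $w_{i,j}$ occurs in $\overline E(v,t,s)$, and links $((v,t,s),S)$ for each monomial $\prod_{(i,j)\in S}w_{i,j}$ (possibly $S=\emptyset$) occurring in $\overline E(v,t,s)$ with nonzero coefficient. *)

(* Quiver representations with an ordered basis, written in
   coordinates; Grassmannians of subrepresentations as row spaces (mxalgebra);
   Schubert cells via Pluecker coordinates; "affine space" via polynomial
   maps (multinomials' mpoly). *)
From HB Require Import structures.
From mathcomp Require Import all_boot all_order all_algebra.
From mathcomp Require Import mpoly.
Set Implicit Arguments. Unset Strict Implicit. Unset Printing Implicit Defensive.
Import Order.TTheory GRing.Theory.
Local Open Scope ring_scope.

Section QuiverRep.
Variable K : fieldType.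
Variables (Q0 Q1 : finType) (src tgt : Q1 -> Q0).
(* representation M with ordered basis B = 'I_d (natural order);
   F i = the vertex p with i in B_p;  M_v(i) = \sum_j mu v i j * j *)
Variables (d : nat) (F : 'I_d -> Q0) (mu : Q1 -> 'I_d -> 'I_d -> K).

Definition cq_arrow (v : Q1) (i j : 'I_d) : bool := mu v i j != 0.

Definition extremal (v : Q1) (s t : 'I_d) : bool :=
  cq_arrow v s t &&
  [forall s' : 'I_d, forall t' : 'I_d,
     (cq_arrow v s' t' && ((s', t') != (s, t))) ==> ((s < s')%N || (t' < t)%N)].

Definition ext_succ_closed (beta : {set 'I_d}) : Prop :=
  forall v s t, extremal v s t -> s \in beta -> t \in beta.

Definition of_type (e : Q0 -> nat) (beta : {set 'I_d}) : Prop :=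
  forall p, #|[set i in beta | F i == p]| = e p.

Definition Rel2 (i j : 'I_d) : bool := (F i == F j) && (i <= j)%N.

Definition Rel3 (v : Q1) (t s : 'I_d) : bool :=
  (F s == src v) && (F t == tgt v) &&
  [exists s' : 'I_d, exists t' : 'I_d,
     [&& cq_arrow v s' t', (s' <= s)%N & (t <= t')%N]].

Definition rss_vertex (x : ('I_d * 'I_d) + (Q1 * 'I_d * 'I_d)) : bool :=
  match x with
  | inl (i, j) => Rel2 i j && (i < j)%N
  | inr (v, t, s) => Rel3 v t s && ~~ extremal v s t
  end.

Definition rss_trivial : Prop := forall x, ~~ rss_vertex x.

(* M_p as a coordinate subspace of K^d (row vectors) *)
Definition Msp (p : Q0) : 'M[K]_d := diag_mx (\row_i (F i == p)%:R).
(* M_v as a matrix acting on row vectors *)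
Definition Mmx (v : Q1) : 'M[K]_d := \matrix_(i, j) mu v i j.
Definition Npart (N : 'M[K]_d) (p : Q0) : 'M[K]_d := (N :&: Msp p)%MS.

Definition is_subrep (N : 'M[K]_d) : bool :=
  (N == \sum_p Npart N p)%MS &&
  [forall v : Q1, (Npart N (src v) *m Mmx v <= Npart N (tgt v))%MS].

Definition Gr (e : Q0 -> nat) (N : 'M[K]_d) : Prop :=
  is_subrep N /\ forall p, \rank (Npart N p) = e p.

(* column selection matrix: picks the elements of beta in increasing order *)
Definition selmx (e : nat) (beta : {set 'I_d}) : 'M[K]_(d, e) :=
  \matrix_(j, l) ((j \in beta) && (#|[set k in beta | (k < j)%N]| == l))%:R.

(* Pluecker coordinate Delta_beta of the row space of N, computed on the
   basis row_base N (well defined up to a nonzero scalar) *)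
Definition plucker (N : 'M[K]_d) (beta : {set 'I_d}) : K :=
  if #|beta| == \rank N then \det (row_base N *m selmx (\rank N) beta) else 0.

(* beta <= beta' : l-th smallest element of beta <= that of beta' *)
Definition le_set (beta beta' : {set 'I_d}) : bool :=
  all2 (fun x y : 'I_d => (x <= y)%N) (enum beta) (enum beta').
Definition lt_set (beta beta' : {set 'I_d}) : bool :=
  (beta' != beta) && le_set beta beta'.

Definition schubert_cell (beta : {set 'I_d}) (N : 'M[K]_d) : Prop :=
  plucker N beta != 0 /\
  forall beta', lt_set beta beta' -> plucker N beta' = 0.

Definition cellM (e : Q0 -> nat) (beta : {set 'I_d}) (N : 'M[K]_d) : Prop :=
  schubert_cell beta N /\ Gr e N.

(* A subset X of C_beta(d) is an affine space: it is isomorphic to A^n,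
   in the standard affine coordinates of C_beta(d) (the unique basis matrix
   A of V with A restricted to the columns beta equal to the identity):
   there is a polynomial map f : A^n -> {matrices A} landing in X,
   a polynomial map g in the entries of A inverting it, and f is onto X. *)
Definition affine_cell (beta : {set 'I_d}) (X : 'M[K]_d -> Prop) : Prop :=
  exists (n : nat) (f : 'M[{mpoly K[n]}]_(#|beta|, d))
         (g : 'I_n -> {mpoly K[#|beta| * d]}),
    let fx (x : 'I_n -> K) := map_mx (fun P : {mpoly K[n]} => P.@[x]) f in
    [/\ forall x, X (<<fx x>>)%MS,
        forall x, fx x *m selmx #|beta| beta = 1%:M,
        forall x i, (g i).@[fun k => mxvec (fx x) 0 k] = x i
      & forall V, X V -> exists x, (<<fx x>> == V)%MS].

End QuiverRep.

From HB Require Import structures.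
From mathcomp Require Import all_boot all_order all_algebra.
From mathcomp Require Import mpoly.
Set Implicit Arguments. Unset Strict Implicit. Unset Printing Implicit Defensive.
Import Order.TTheory GRing.Theory.
Local Open Scope ring_scope.

(* In a thin representation every vertex carries at most one basis vector, so
   each arrow v has at most one coefficient-quiver arrow over it; that arrow is
   then extremal, and no vertex of the reduced Schubert system survives.
   Likewise every component N_p of a subrepresentation N is 0 or the line of the
   basis vector at p, so N is the coordinate subspace spanned by a set beta of
   basis vectors; beta is extremal successor closed, and its type e determines
   it.  Hence Gr_e(M) is the single coordinate subspace of beta or is empty, and
   since the Pluecker coordinates of a coordinate subspace vanish except at its
   own index set, the Schubert cell of beta is that point, an affine space A^0. *)

Section CoordinateSubspace.
Variables (K : fieldType) (d : nat).
Implicit Types (b : {set 'I_d}) (i j k : 'I_d).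

Definition coord_mx b : 'M[K]_d := diag_mx (\row_i (i \in b)%:R).

Lemma sub_coord_mxP m (A : 'M[K]_(m, d)) b :
  reflect (forall r i, i \notin b -> A r i = 0) (A <= coord_mx b)%MS.
Proof.
apply: (iffP submxP) => [[W ->] r i ib|A0].
  by rewrite mul_mx_diag !mxE (negbTE ib) mulr0.
exists A; apply/matrixP => r i; rewrite mul_mx_diag !mxE.
by case: (boolP (i \in b)) => ib; rewrite ?mulr1 // A0 // mulr0.
Qed.

Lemma mul_coord_mx m (A : 'M[K]_(m, d)) b :
  (A <= coord_mx b)%MS -> A *m coord_mx b = A.
Proof.
move/sub_coord_mxP => A0; apply/matrixP => r i; rewrite mul_mx_diag !mxE.
by case: (boolP (i \in b)) => ib; rewrite ?mulr1 // A0 // mulr0.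
Qed.

Lemma delta_sub_coord_mx j b :
  ((delta_mx 0 j : 'rV[K]_d) <= coord_mx b)%MS = (j \in b).
Proof.
apply/sub_coord_mxP/idP => [A0|jb r i ib].
  apply: contraT => jb; have /eqP := A0 0 j jb.
  by rewrite mxE !eqxx oner_eq0.
rewrite mxE; case: (i =P j) => [eij|_]; last by rewrite andbF.
by move: ib; rewrite eij jb.
Qed.

Lemma coord_mx_sub m (N : 'M[K]_(m, d)) b :
  (forall i, i \in b -> ((delta_mx 0 i : 'rV[K]_d) <= N)%MS) ->
  (coord_mx b <= N)%MS.
Proof.
move=> bN; apply/row_subP => i; rewrite row_diag_mx mxE.
by case: (boolP (i \in b)) => ib; rewrite ?scale0r ?sub0mx // scalemx_sub ?bN.
Qed.

Lemma coord_mxS b1 b2 : b1 \subset b2 -> (coord_mx b1 <= coord_mx b2)%MS.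
Proof.
by move=> sb; apply: coord_mx_sub => i ib; rewrite delta_sub_coord_mx (subsetP sb).
Qed.

Definition pos_in b j : nat := #|[set k in b | (k < j)%N]|.

Lemma pos_in_lt_card b j : j \in b -> (pos_in b j < #|b|)%N.
Proof.
move=> jb; apply: proper_card; rewrite properE; apply/andP; split.
  by apply/subsetP => k; rewrite inE => /andP[].
by apply/subsetPn; exists j; rewrite // inE ltnn andbF.
Qed.

Lemma pos_in_mono b j k : j \in b -> (j < k)%N -> (pos_in b j < pos_in b k)%N.
Proof.
move=> jb jk; apply: proper_card; rewrite properE; apply/andP; split.
  by apply/subsetP => x; rewrite !inE => /andP[-> /ltn_trans->].
by apply/subsetPn; exists j; rewrite !inE ?jb ?jk // ltnn andbF.
Qed.

Lemma pos_in_inj b j k : j \in b -> k \in b -> pos_in b j = pos_in b k -> j = k.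
Proof.
move=> jb kb ejk; apply: val_inj; case: (ltngtP j k) => // [jk|kj].
  by have := pos_in_mono jb jk; rewrite ejk ltnn.
by have := pos_in_mono kb kj; rewrite ejk ltnn.
Qed.

Lemma pos_in_surj b (l : 'I_#|b|) : exists2 j, j \in b & pos_in b j = l.
Proof.
pose f j : 'I_#|b| := insubd l (pos_in b j).
have fE j : j \in b -> val (f j) = pos_in b j.
  by move=> jb; rewrite insubdK //; apply: pos_in_lt_card.
have finj : {in b &, injective f}.
  by move=> j k jb kb /(congr1 val); rewrite !fE //; apply: pos_in_inj.
have /subset_cardP/(_ (subsetT _)) : #|f @: b| = #|[set: 'I_#|b|]|.
  by rewrite card_in_imset // cardsT card_ord.
move=> fb; have := in_setT l; rewrite -fb => /imsetP[j jb ->].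
by exists j; rewrite ?fE.
Qed.

Local Notation sel b := (selmx K #|b| b).

Lemma selmxE b j (l : 'I_#|b|) : sel b j l = ((j \in b) && (pos_in b j == l))%:R.
Proof. by rewrite mxE. Qed.

Lemma trmx_selmx_mul b : (sel b)^T *m sel b = 1%:M.
Proof.
apply/matrixP => l l'; rewrite !mxE; have [j jb jl] := pos_in_surj l.
rewrite (bigD1 j) //= big1 ?addr0 => [|k kj].
  by rewrite mxE !selmxE jb jl eqxx mul1r val_eqE.
rewrite mxE !selmxE; case: (boolP (_ && _)) => [/andP[kb /eqP kl]|_].
  by case/eqP: kj; apply: (pos_in_inj kb jb); rewrite kl jl.
by rewrite mul0r.
Qed.

Lemma selmx_mul_trmx b : sel b *m (sel b)^T = coord_mx b.
Proof.
apply/matrixP => j k; rewrite !mxE.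
have [jb|jb] := boolP (j \in b); last first.
  by rewrite mul0rn big1 // => l _; rewrite selmxE (negbTE jb) mul0r.
rewrite (bigD1 (Ordinal (pos_in_lt_card jb))) //= big1 ?addr0 => [|l nl].
  rewrite [_^T _ _]mxE !selmxE jb eqxx mul1r /=.
  have [<-|njk] := eqVneq j k; first by rewrite jb eqxx.
  case: (boolP (k \in b)) => //= kb; case: eqP => // /esym ekj.
  by case/eqP: njk; apply: pos_in_inj ekj.
rewrite selmxE jb /=; case: eqP => [ejl|_]; last by rewrite mul0r.
by case/eqP: nl; apply: val_inj; rewrite /= ejl.
Qed.

Lemma trmx_selmx_eqmx b : ((sel b)^T == coord_mx b)%MS.
Proof.
apply/andP; split; first by apply/sub_coord_mxP => r i ib; rewrite !mxE (negbTE ib).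
by rewrite -selmx_mul_trmx submxMl.
Qed.

Lemma rank_coord_mx b : \rank (coord_mx b) = #|b|.
Proof.
rewrite -(eqmx_rank (trmx_selmx_eqmx b)); apply/eqP; rewrite eqn_leq rank_leq_row.
by rewrite -{1}(mxrank1 K #|b|) -(trmx_selmx_mul b) mxrankM_maxl.
Qed.

Lemma det_mul_selmx_neq0 e (X : 'M[K]_(e, d)) b :
  e = #|b| -> row_free X -> (X <= coord_mx b)%MS -> \det (X *m selmx K e b) != 0.
Proof.
move=> eb; subst e => freeX sXb.
have XE : X = X *m sel b *m (sel b)^T by rewrite -mulmxA selmx_mul_trmx mul_coord_mx.
have : row_free (X *m sel b).
  rewrite /row_free eqn_leq rank_leq_row -{1}(eqP freeX).
  by rewrite {1}XE mxrankM_maxl.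
by rewrite row_free_unit unitmxE unitfE.
Qed.

Lemma det_mul_selmx_eq0 e (X : 'M[K]_(e, d)) b b' j :
  e = #|b'| -> (X <= coord_mx b)%MS -> j \in b' -> j \notin b ->
  \det (X *m selmx K e b') = 0.
Proof.
move=> eb'; subst e => /sub_coord_mxP X0 jb' jb.
rewrite (expand_det_col _ (Ordinal (pos_in_lt_card jb'))) big1 // => r _.
rewrite mxE big1 ?mul0r // => k _; rewrite selmxE.
case: (boolP (k \in b)) => kb; last by rewrite X0 ?mul0r.
case: (boolP (_ && _)) => [/andP[kb' /eqP kj]|_]; last by rewrite mulr0.
by move: jb; rewrite -(pos_in_inj kb' jb' kj) kb.
Qed.

Lemma plucker_coord_mx (N : 'M[K]_d) b : (N == coord_mx b)%MS -> plucker N b != 0.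
Proof.
move=> Nb; have rN : \rank N = #|b| by rewrite (eqmx_rank Nb) rank_coord_mx.
rewrite /plucker ifT ?rN //; apply: det_mul_selmx_neq0 => //; first exact: row_base_free.
by rewrite (eq_row_base N) (eqmxP Nb).
Qed.

Lemma plucker_coord_mx_neq (N : 'M[K]_d) b b' :
  (N == coord_mx b)%MS -> b' != b -> plucker N b' = 0.
Proof.
move=> Nb b'b; have rN : \rank N = #|b| by rewrite (eqmx_rank Nb) rank_coord_mx.
rewrite /plucker; case: eqP => // b'N.
have /subsetPn[j jb' jb] : ~~ (b' \subset b).
  by apply: contra_neqN b'b => sb; apply/eqP; rewrite eqEcard sb b'N rN /=.
apply: (det_mul_selmx_eq0 _ _ jb' jb) => //.
by rewrite (eq_row_base N) (eqmxP Nb).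
Qed.

Lemma affine_cell_point b (X : 'M[K]_d -> Prop) :
  (forall V, (V == coord_mx b)%MS -> X V) ->
  (forall V, X V -> (V == coord_mx b)%MS) -> affine_cell b X.
Proof.
move=> Xb bX; exists 0%N, (map_mx (fun c => c%:MP_[0]) (sel b)^T), (fun _ => 0).
have fxE (x : 'I_0 -> K) :
    map_mx (fun P : {mpoly K[0]} => P.@[x]) (map_mx (fun c => c%:MP_[0]) (sel b)^T)
    = (sel b)^T.
  by apply/matrixP => i j; rewrite !mxE mevalC.
cbv zeta; split=> [x|x|x []//|V /bX Vb]; rewrite ?fxE.
- by apply: Xb; rewrite !genmxE trmx_selmx_eqmx.
- exact: trmx_selmx_mul.
exists (fun _ => 0); rewrite fxE !genmxE.
by apply/andP; split; rewrite (eqmxP (trmx_selmx_eqmx b)) (eqmxP Vb).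
Qed.

End CoordinateSubspace.

Section ThinRepresentation.
Variables (K : fieldType) (Q0 Q1 : finType) (src tgt : Q1 -> Q0).
Variables (d : nat) (F : 'I_d -> Q0) (mu : Q1 -> 'I_d -> 'I_d -> K).
Hypothesis hmu : forall v i j, mu v i j != 0 -> F i = src v /\ F j = tgt v.
Hypothesis thin : forall p : Q0, (#|[set i | F i == p]| <= 1)%N.
Implicit Types (b : {set 'I_d}) (i j s t : 'I_d) (N : 'M[K]_d).
Local Notation coord_mx := (coord_mx K).

Lemma thin_inj : injective F.
Proof. by move=> i j Fij; apply: (card_le1_eqP (thin (F j))); rewrite inE ?Fij. Qed.

Lemma cq_arrow_eq v s t s' t' :
  cq_arrow mu v s t -> cq_arrow mu v s' t' -> s' = s /\ t' = t.
Proof.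
move=> /hmu[Fs Ft] /hmu[Fs' Ft'].
by split; apply: thin_inj; rewrite ?Fs ?Fs' ?Ft ?Ft'.
Qed.

Lemma cq_arrow_extremal v s t : cq_arrow mu v s t -> extremal mu v s t.
Proof.
move=> vst; rewrite /extremal vst; apply/'forall_forallP => s' t'.
apply/implyP => /andP[/(cq_arrow_eq vst)[-> ->]]; by rewrite eqxx.
Qed.

Lemma rss_trivial_thin : rss_trivial src tgt F mu.
Proof.
case=> [[i j]|[[v t] s]] /=.
  rewrite /Rel2 negb_and -implybE; apply/implyP => /andP[/eqP/thin_inj-> _].
  by rewrite ltnn.
rewrite negb_and negbK -implybE; apply/implyP.
case/andP=> /andP[/eqP Fs /eqP Ft] /existsP[s' /existsP[t' /and3P[vst' _ _]]].
have [Fs' Ft'] := hmu vst'.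
have -> : s = s' by apply: thin_inj; rewrite Fs Fs'.
have -> : t = t' by apply: thin_inj; rewrite Ft Ft'.
exact: cq_arrow_extremal.
Qed.

Lemma ext_succ_closedP b :
  reflect (ext_succ_closed mu b)
          [forall v, forall s, forall t, extremal mu v s t ==> (s \in b) ==> (t \in b)].
Proof.
apply: (iffP 'forall_'forall_forallP) => [closed v s t /= vst sb|closed v s t].
  by move/implyP/(_ vst)/implyP: (closed v s t); apply.
by apply/implyP => /closed/implyP.
Qed.

Lemma Msp_coord p : Msp K F p = coord_mx [set i | F i == p].
Proof. by congr diag_mx; apply/rowP => i; rewrite !mxE inE. Qed.

Definition support N : {set 'I_d} := [set i | ((delta_mx 0 i : 'rV[K]_d) <= N)%MS].

(* [M_p] is at most a line, so a vector of [N_p] with a nonzero [j]-th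
   coordinate is a multiple of the basis vector [j]. *)
Lemma mem_support (u : 'rV[K]_d) N p j :
  (u <= N)%MS -> (u <= Msp K F p)%MS -> u 0 j != 0 -> j \in support N.
Proof.
rewrite Msp_coord => uN /sub_coord_mxP u0 uj.
have Fj : F j = p by apply/eqP; apply: contraR uj => Fj; rewrite u0 ?inE.
have uE : u = u 0 j *: delta_mx 0 j.
  apply/rowP => k; rewrite !mxE eqxx /=; have [->|kj] := eqVneq k j.
    by rewrite mulr1.
  by rewrite mulr0 u0 // inE -Fj (inj_eq thin_inj).
by rewrite inE -(scalerK uj (delta_mx 0 j)) -uE scalemx_sub.
Qed.

Lemma Npart_coord N p :
  (Npart F N p == coord_mx [set i in support N | F i == p])%MS.
Proof.
apply/andP; split; last first.
  apply: coord_mx_sub => i; rewrite !inE => /andP[iN Fi].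
  by rewrite sub_capmx iN Msp_coord delta_sub_coord_mx inE.
apply/sub_coord_mxP => r i; apply: contraNeq => nz.
have rowN : (row r (Npart F N p) <= Npart F N p)%MS by exact: row_sub.
have rN := submx_trans rowN (capmxSl _ _).
have rM := submx_trans rowN (capmxSr _ _).
have rnz : row r (Npart F N p) 0 i != 0 by rewrite mxE.
rewrite inE (mem_support rN rM rnz) /=.
move: rM; rewrite Msp_coord => /sub_coord_mxP rM.
by apply: contraR rnz => Fi; rewrite rM ?inE.
Qed.

Lemma rank_Npart N p : \rank (Npart F N p) = #|[set i in support N | F i == p]|.
Proof. by rewrite (eqmx_rank (Npart_coord N p)) rank_coord_mx. Qed.

Lemma support_coord_mx N b : (N == coord_mx b)%MS -> support N = b.
Proof. by move/eqmxP=> Nb; apply/setP => i; rewrite inE Nb delta_sub_coord_mx. Qed.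

Lemma card_fiber b i : #|[set k in b | F k == F i]| = (i \in b).
Proof.
have -> : [set k in b | F k == F i] = b :&: [set i].
  by apply/setP => k; rewrite !inE (inj_eq thin_inj).
case: (boolP (i \in b)) => ib; first by rewrite (setIidPr _) ?sub1set ?cards1.
by rewrite disjoint_setI0 ?cards0 // disjoint_sym disjoints1.
Qed.

Lemma of_type_inj e b1 b2 : of_type F e b1 -> of_type F e b2 -> b1 = b2.
Proof.
move=> t1 t2; apply/setP => i; have := t1 (F i); rewrite -(t2 (F i)) !card_fiber.
by case: (i \in b1); case: (i \in b2).
Qed.

Lemma Gr_support e N : Gr src tgt F mu e N ->
  [/\ (N == coord_mx (support N))%MS, of_type F e (support N)
    & ext_succ_closed mu (support N)].
Proof.
case=> /andP[/andP[Nsum _] /forallP NvN] rankN; split.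
- apply/andP; split; last by apply: coord_mx_sub => i; rewrite inE.
  apply: submx_trans Nsum _; apply/sumsmx_subP => p _.
  apply: submx_trans (proj1 (andP (Npart_coord N p))) (coord_mxS _ _).
  by apply/subsetP => i; rewrite inE => /andP[].
- by move=> p; rewrite -rank_Npart rankN.
move=> v s t /andP[vst _]; rewrite inE => sN.
have [Fs Ft] := hmu vst.
have ds : ((delta_mx 0 s : 'rV[K]_d) <= Npart F N (src v))%MS.
  by rewrite sub_capmx sN Msp_coord delta_sub_coord_mx inE Fs eqxx.
have dt := submx_trans (submxMr (Mmx mu v) ds) (NvN v).
apply: (mem_support (submx_trans dt (capmxSl _ _)) (submx_trans dt (capmxSr _ _))).
by rewrite -rowE !mxE.
Qed.

Lemma Gr_coord_mx e N b : (N == coord_mx b)%MS -> ext_succ_closed mu b ->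
  of_type F e b -> Gr src tgt F mu e N.
Proof.
move=> Nb closed_b tb; have suppN := support_coord_mx Nb.
split; last by move=> p; rewrite rank_Npart suppN tb.
apply/andP; split.
  apply/andP; split; last by apply/sumsmx_subP => p _; exact: capmxSl.
  rewrite (eqmxP Nb); apply: coord_mx_sub => i ib; apply: (sumsmx_sup (F i)) => //.
  rewrite sub_capmx (eqmxP Nb) !delta_sub_coord_mx ib Msp_coord.
  by rewrite delta_sub_coord_mx inE eqxx.
apply/forallP => v; have := Npart_coord N (tgt v); rewrite suppN => /andP[_].
apply: submx_trans; apply/sub_coord_mxP => r t.
rewrite inE negb_and => tN; rewrite mxE big1 // => s _.
have /andP[/sub_coord_mxP Ns _] := Npart_coord N (src v); rewrite suppN in Ns.
case: (boolP ((s \in b) && (F s == src v))) => [/andP[sb /eqP Fs]|sN].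
  rewrite mxE; have [->|vst] := eqVneq (mu v s t) 0; first by rewrite mulr0.
  have [_ Ft] := hmu vst.
  by move: tN; rewrite (closed_b _ _ _ (cq_arrow_extremal vst) sb) Ft eqxx.
by rewrite Ns ?inE // mul0r.
Qed.

Lemma Gr_eq_coord_mx e N b : Gr src tgt F mu e N -> of_type F e b ->
  (N == coord_mx b)%MS /\ ext_succ_closed mu b.
Proof.
move=> GN tb; have [Nsupp tsupp csupp] := Gr_support GN.
by rewrite -(of_type_inj tsupp tb).
Qed.

Lemma cellM_coord_mx e b N : of_type F e b -> ext_succ_closed mu b ->
  cellM src tgt F mu e b N <-> (N == coord_mx b)%MS.
Proof.
move=> tb closed_b; split=> [[_ GN]|Nb]; first by have [] := Gr_eq_coord_mx GN tb.
split; last exact: Gr_coord_mx Nb closed_b tb.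
split=> [|b' /andP[b'b _]]; first exact: plucker_coord_mx.
exact: plucker_coord_mx_neq Nb b'b.
Qed.

End ThinRepresentation.

Unset Implicit Arguments.
Theorem corollary2p22 (K : fieldType) (Q0 Q1 : finType) (src tgt : Q1 -> Q0)
    (d : nat) (F : 'I_d -> Q0) (mu : Q1 -> 'I_d -> 'I_d -> K)
    (hmu : forall v i j, mu v i j != 0 -> F i = src v /\ F j = tgt v)
    (thin : forall p : Q0, (#|[set i | F i == p]| <= 1)%N) :
  rss_trivial src tgt F mu /\
  forall e : Q0 -> nat,
    (forall beta : {set 'I_d}, of_type F e beta ->
       (forall N, ~ cellM src tgt F mu e beta N) \/
       affine_cell beta (cellM src tgt F mu e beta)) /\
    ((exists beta, of_type F e beta /\ ext_succ_closed mu beta) ->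
       exists N : 'M[K]_d, Gr src tgt F mu e N /\
         forall N' : 'M[K]_d, Gr src tgt F mu e N' -> (N' == N)%MS) /\
    (~ (exists beta, of_type F e beta /\ ext_succ_closed mu beta) ->
       forall N : 'M[K]_d, ~ Gr src tgt F mu e N).
Proof.
split; first exact: rss_trivial_thin hmu thin.
move=> e; split; [|split].
- move=> b tb; case: (ext_succ_closedP mu b) => closed_b.
    by right; apply: affine_cell_point => V /(cellM_coord_mx hmu thin V tb closed_b).
  by left=> N [_ /(Gr_eq_coord_mx hmu thin)/(_ tb)[]].
- case=> b [tb closed_b]; exists (coord_mx K b).
  split; first by apply: (Gr_coord_mx hmu thin _ closed_b tb); apply/eqmxP.
  by move=> N /(Gr_eq_coord_mx hmu thin)/(_ tb)[].
- move=> no_beta N /(Gr_support hmu thin)[_ tN closedN].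
  by apply: no_beta; exists (support N).
Qed.
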